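(* Fix an integer $b\ge2$ and $0<\alpha<1$. Let $C_\alpha=\tfrac{10}{3}\alpha^{-1}\log_2 10-\alpha^{-1}\log_2(1-2^{-\alpha})+2\alpha^{-1}-1$ and let $\ell_0\in\mathbb{N}$ satisfy $b^{\ell_0}>\max\{\frac{20}{b^{1-\alpha}-1},\,40C_\alpha b^{2C_\alpha(1-\alpha)}\}$. Put $\ell=b^{-\ell_0}$ and, for $i\in\{0,\dots,b^{\ell_0+3}-1\}$, $r_i=ib^{-\ell_0-3}$, $s_i=r_i+\ell$, and $g_i(x)=\overline{h}_\ell\big(x-\tfrac12(r_i+s_i-1)\big)$ (a $1$-periodic function). Then for all $x<y$ in $\mathbb{R}$ with $y-x<b^{-\ell_0-1}$ there exists $i\in\{0,\dots,b^{\ell_0+3}-1\}$ such that $$W^{\alpha,b}_{g_i}(y)-W^{\alpha,b}_{g_i}(x)\ge \tfrac{7}{10}\,b^{\alpha\ell_0-2(1-\alpha)}\,(y-x)^\alpha.$$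
   Context: For $0<\ell\le\tfrac12$, $h_\ell\colon[0,1)\to\mathbb{R}$ is defined by $h_\ell(x)=-\frac{x}{1-\ell}$ for $0\le x<\tfrac12(1-\ell)$, $h_\ell(x)=\frac{x}{\ell}-\frac{1}{2\ell}$ for $\tfrac12(1-\ell)\le x<\tfrac12(1+\ell)$, and $h_\ell(x)=\frac{1-x}{1-\ell}$ for $\tfrac12(1+\ell)\le x<1$; and $\overline{h}_\ell(x)=h_\ell(x-\lfloor x\rfloor)$ is its $1$-periodic extension to $\mathbb{R}$ (a continuous piecewise linear function with values in $[-\tfrac12,\tfrac12]$). For a $1$-periodic Lipschitz $g$, $W_g^{\alpha,b}(x)=\sum_{k=0}^\infty b^{-\alpha k}g(b^kx)$. *)

From Stdlib Require Import Reals Lra.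
From Coquelicot Require Import Coquelicot.
Open Scope R_scope.

Definition rfloor (x : R) : R := IZR (up x) - 1.

Definition h_ell (l x : R) : R :=
  if Rlt_dec x ((1 - l) / 2) then - x / (1 - l)
  else if Rlt_dec x ((1 + l) / 2) then x / l - 1 / (2 * l)
  else (1 - x) / (1 - l).

Definition hbar (l x : R) : R := h_ell l (x - rfloor x).

Definition Wfun (alpha b : R) (g : R -> R) (x : R) : R :=
  Series (fun k : nat => Rpower b (- alpha * INR k) * g (b ^ k * x)).

Definition log2 (x : R) : R := ln x / ln 2.

Definition C_alpha (alpha : R) : R :=
  10 / 3 / alpha * log2 10 - / alpha * log2 (1 - Rpower 2 (- alpha))
  + 2 / alpha - 1.

Definition g_i (b l0 i : nat) (x : R) : R :=
  let l := / (INR b ^ l0) in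
  let r := INR i / (INR b ^ (l0 + 3)) in
  let s := r + l in
  hbar l (x - (r + s - 1) / 2).

From Stdlib Require Import Reals Lra Lia ZArith.
From Coquelicot Require Import Coquelicot.
Open Scope R_scope.

(* At the scale [K] where [b^K (y - x)] is a fraction [rho in (1/b, 1]] of [ell = b^-l0],
   the steep segments (slope [1/ell]) of the [g_i] sit on a grid of mesh [ell / b^3], so one of
   them is centred on [[b^K x, b^K y]] and the [K]-th term of [W_{g_i}] grows by almost
   [b^(-alpha K) rho].  Since [g_i] is bounded by [1/2] and decreases with slope at most
   [1/(1-ell)], every other term loses at most [b^(-alpha k)] times [b^k (y - x)/(1-ell)]
   for [k <= K + l0] and at most [b^(-alpha k)] beyond; both geometric sums are small
   multiples of [b^(-alpha K) rho] by the choice of [l0]. *)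

Lemma exp_le_compat x y : x <= y -> exp x <= exp y.
Proof. intros [H|<-]; [left; now apply exp_increasing | lra]. Qed.

Lemma ln_le_compat x y : 0 < x -> x <= y -> ln x <= ln y.
Proof. intros Hx [H|<-]; [left; now apply ln_increasing | lra]. Qed.

Lemma exp_pow_INR x n : exp x ^ n = exp (INR n * x).
Proof.
  induction n as [|n IH]; simpl pow.
  - now rewrite Rmult_0_l, exp_0.
  - rewrite IH, <- exp_plus, S_INR. f_equal. ring.
Qed.

Lemma Rpower_mul_INR B a n : Rpower B (a * INR n) = Rpower B a ^ n.
Proof. rewrite <- Rpower_pow by apply exp_pos. now rewrite Rpower_mult. Qed.

Lemma Rpower_gt_1 B a : 1 < B -> 0 < a -> 1 < Rpower B a.
Proof. intros HB Ha. rewrite <- (Rpower_O B) at 1 by lra. apply Rpower_lt; lra. Qed.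

Lemma Rpower_neg_bounds B a : 1 < B -> 0 < a -> 0 < Rpower B (- a) < 1.
Proof.
  intros HB Ha. split; [apply exp_pos|].
  rewrite <- (Rpower_O B) by lra. apply Rpower_lt; lra.
Qed.

Lemma Rpower_one_sub B a : 0 < B -> Rpower B (1 - a) = Rpower B (- a) * B.
Proof.
  intros HB. replace (1 - a) with (- a + 1) by ring. now rewrite Rpower_plus, Rpower_1.
Qed.

Lemma rfloor_spec x : rfloor x <= x < rfloor x + 1.
Proof. unfold rfloor. destruct (archimed x). lra. Qed.

Lemma rfloor_IZR x : rfloor x = IZR (up x - 1).
Proof. unfold rfloor. now rewrite minus_IZR. Qed.

Lemma rfloor_unique x (n : Z) : IZR n <= x < IZR n + 1 -> rfloor x = IZR n.
Proof.
  intros Hx. unfold rfloor.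
  replace (up x) with (n + 1)%Z by (apply tech_up; rewrite plus_IZR; lra).
  rewrite plus_IZR. lra.
Qed.

Lemma rfloor_le x y : x <= y -> rfloor x <= rfloor y.
Proof.
  intros Hxy. destruct (rfloor_spec x) as [Hx _], (rfloor_spec y) as [_ Hy].
  rewrite !rfloor_IZR in *. apply IZR_le.
  assert (H : IZR (up x - 1) < IZR (up y - 1 + 1)) by (rewrite plus_IZR; lra).
  apply lt_IZR in H. lia.
Qed.

Lemma rfloor_lt_succ_le x y : rfloor x < rfloor y -> rfloor x + 1 <= rfloor y.
Proof.
  rewrite !rfloor_IZR. intros H. apply lt_IZR in H. rewrite <- plus_IZR. apply IZR_le. lia.
Qed.

Section Tent.

Variable l : R.
Hypothesis Hl : 0 < l < 1.

Lemma h_ell_abs_le s : 0 <= s < 1 -> Rabs (h_ell l s) <= / 2.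
Proof.
  intros Hs. unfold h_ell. apply Rabs_le.
  destruct (Rlt_dec s ((1 - l) / 2)); [|destruct (Rlt_dec s ((1 + l) / 2))];
    split; apply Rmult_le_reg_r with (l * (1 - l)); try nra;
    unfold Rdiv; field_simplify; nra.
Qed.

(* Adding back the slope [1/(1-l)] of the descending branches makes [h_ell] nondecreasing. *)
Definition h_ell_tilt s := h_ell l s + s / (1 - l).

Lemma h_ell_tilt_range s : 0 <= s < 1 -> 0 <= h_ell_tilt s <= / (1 - l).
Proof.
  intros Hs. unfold h_ell_tilt, h_ell.
  destruct (Rlt_dec s ((1 - l) / 2)); [|destruct (Rlt_dec s ((1 + l) / 2))];
    split; apply Rmult_le_reg_r with (l * (1 - l)); try nra;
    unfold Rdiv; field_simplify; nra.
Qed.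

Lemma h_ell_tilt_le s1 s2 : 0 <= s1 -> s1 <= s2 -> s2 < 1 -> h_ell_tilt s1 <= h_ell_tilt s2.
Proof.
  intros H0 H12 H1. unfold h_ell_tilt, h_ell.
  destruct (Rlt_dec s1 ((1 - l) / 2)); destruct (Rlt_dec s2 ((1 - l) / 2)); try lra;
  try destruct (Rlt_dec s1 ((1 + l) / 2)); try destruct (Rlt_dec s2 ((1 + l) / 2)); try lra;
  apply Rmult_le_reg_r with (l * (1 - l)); try nra; unfold Rdiv; field_simplify; nra.
Qed.

Lemma hbar_abs_le x : Rabs (hbar l x) <= / 2.
Proof. apply h_ell_abs_le. destruct (rfloor_spec x). lra. Qed.

Lemma hbar_tilt_le x y : x <= y -> hbar l x + x / (1 - l) <= hbar l y + y / (1 - l).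
Proof.
  intros Hxy.
  assert (Htilt : forall z, hbar l z + z / (1 - l)
                    = h_ell_tilt (z - rfloor z) + rfloor z / (1 - l))
    by (intros z; unfold hbar, h_ell_tilt; field; lra).
  rewrite !Htilt. destruct (rfloor_spec x), (rfloor_spec y).
  destruct (Rle_lt_or_eq_dec _ _ (rfloor_le x y Hxy)) as [Hlt|Heq].
  - apply rfloor_lt_succ_le in Hlt.
    destruct (h_ell_tilt_range (x - rfloor x)), (h_ell_tilt_range (y - rfloor y)); try lra.
    enough (rfloor x / (1 - l) + / (1 - l) <= rfloor y / (1 - l)) by lra.
    apply Rmult_le_reg_r with (1 - l); [lra|]. unfold Rdiv. field_simplify; lra.
  - rewrite Heq. apply Rplus_le_compat_r, h_ell_tilt_le; lra.
Qed.

Lemma hbar_increment_ge x y : x <= y -> hbar l y - hbar l x >= - (y - x) / (1 - l).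
Proof.
  intros Hxy. assert (H := hbar_tilt_le x y Hxy).
  enough (- (y - x) / (1 - l) = x / (1 - l) - y / (1 - l)) by lra. field. lra.
Qed.

Lemma hbar_steep x (n : Z) : IZR n + (1 - l) / 2 <= x <= IZR n + (1 + l) / 2 ->
  hbar l x = (x - IZR n - (1 - l) / 2) / l - / 2.
Proof.
  intros Hx. unfold hbar, h_ell. rewrite (rfloor_unique x n) by lra.
  destruct (Rlt_dec (x - IZR n) ((1 - l) / 2)); [lra|].
  destruct (Rlt_dec (x - IZR n) ((1 + l) / 2)).
  - field. lra.
  - replace (x - IZR n) with ((1 + l) / 2) by lra. field. lra.
Qed.

End Tent.

Section SteepSegment.

Variables (G : R -> R) (l p : R).
Hypothesis Hl : 0 < l < 1.
Hypothesis G_increment_ge : forall a c, a <= c -> G c - G a >= - (c - a) / (1 - l).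
Hypothesis G_steep : forall t, p <= t <= p + l -> G t = (t - p) / l - / 2.

Lemma steep_increment_ge u v e : u <= v -> v - u <= l -> 0 <= e ->
  p - u <= e -> v - p - l <= e ->
  G v - G u >= (v - u) / l - e * (/ l + / (1 - l)).
Proof.
  intros Huv Hd He H1 H2.
  assert (Ha : 0 < / l) by (apply Rinv_0_lt_compat; lra).
  assert (Hc : 0 < / (1 - l)) by (apply Rinv_0_lt_compat; lra).
  assert (Hal : / l * l = 1) by (field; lra).
  unfold Rdiv in *.
  destruct (Rle_or_lt p u); destruct (Rle_or_lt v (p + l)).
  - rewrite (G_steep v), (G_steep u) by lra. nra.
  - destruct (Rle_or_lt u (p + l)).
    + assert (A := G_increment_ge (p + l) v ltac:(lra)).
      rewrite (G_steep (p + l)) in A by lra. rewrite (G_steep u) by lra. nra.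
    + assert (A := G_increment_ge u v Huv). nra.
  - destruct (Rle_or_lt p v).
    + assert (A := G_increment_ge u p ltac:(lra)).
      rewrite (G_steep p) in A by lra. rewrite (G_steep v) by lra. nra.
    + assert (A := G_increment_ge u v Huv). nra.
  - lra.
Qed.

(* Either [u,v] lies inside [p,p+l], or [v - u > l (1 - 1/m)] and the overhang, at most
   [l/(2m)] on each side, costs at most the stated fraction. *)
Lemma centered_steep_increment_ge u v m : u < v -> v - u <= l -> 1 < m ->
  Rabs (p + l / 2 - (u + v) / 2) <= l / (2 * m) ->
  G v - G u >= (v - u) / l * (1 - / (2 * (1 - l) * (m - 1))).
Proof.
  intros Huv Hd Hm Hmid. apply Rabs_le_between in Hmid.
  assert (Hr : 0 < / (2 * (1 - l) * (m - 1))) by (apply Rinv_0_lt_compat; nra).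
  replace (l / (2 * m)) with (l / m / 2) in Hmid by (field; lra).
  assert (0 < l / m) by (apply Rdiv_lt_0_compat; lra).
  destruct (Rle_or_lt (l / m) (l - (v - u))) as [Hin|Hover].
  - assert (M := steep_increment_ge u v 0 ltac:(lra) Hd ltac:(lra) ltac:(lra) ltac:(lra)).
    assert (0 <= (v - u) / l) by (apply Rdiv_le_0_compat; lra). nra.
  - set (e := (l / m - (l - (v - u))) / 2).
    assert (M := steep_increment_ge u v e ltac:(lra) Hd
                   ltac:(unfold e; lra) ltac:(unfold e; lra) ltac:(unfold e; lra)).
    enough (e * (/ l + / (1 - l)) <= (v - u) / l * / (2 * (1 - l) * (m - 1))) by lra.
    assert (Hlm : l * (1 - / m) < v - u).
    { replace (l * (1 - / m)) with (l - l / m) by (field; lra). lra. }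
    apply Rle_trans with (l / m / 2 * (/ l + / (1 - l))).
    + apply Rmult_le_compat_r; [|unfold e; lra].
      apply Rplus_le_le_0_compat; left; apply Rinv_0_lt_compat; lra.
    + apply Rle_trans with (l * (1 - / m) / l * / (2 * (1 - l) * (m - 1))).
      * right. field. lra.
      * apply Rmult_le_compat_r; [lra|]. unfold Rdiv. apply Rmult_le_compat_r; [|lra].
        left; apply Rinv_0_lt_compat; lra.
Qed.

End SteepSegment.

Lemma exists_grid_point (N : nat) (c : R) : (0 < N)%nat ->
  exists (i : nat) (n : Z), (i < N)%nat /\ Rabs (INR i / INR N + IZR n - c) <= / (2 * INR N).
Proof.
  intros HN. assert (HNR : 0 < INR N) by (apply lt_0_INR; lia).
  set (z := (up (INR N * c + / 2) - 1)%Z).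
  destruct (archimed (INR N * c + / 2)) as [Z1 Z2].
  assert (Hz : IZR z <= INR N * c + / 2 < IZR z + 1)
    by (unfold z; rewrite minus_IZR; lra).
  set (Zn := Z.of_nat N).
  assert (HZn : (0 < Zn)%Z) by (unfold Zn; lia).
  assert (Hdm := Z.div_mod z Zn ltac:(lia)).
  assert (Hmod := Z.mod_pos_bound z Zn HZn).
  exists (Z.to_nat (z mod Zn)), (z / Zn)%Z. split.
  - apply Nat2Z.inj_lt. rewrite Z2Nat.id by lia. fold Zn. lia.
  - assert (Hzdec : IZR z = INR N * IZR (z / Zn) + INR (Z.to_nat (z mod Zn))).
    { rewrite (INR_IZR_INZ (Z.to_nat _)), Z2Nat.id by lia.
      replace (INR N) with (IZR Zn) by (unfold Zn; now rewrite INR_IZR_INZ).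
      rewrite <- mult_IZR, <- plus_IZR. now f_equal. }
    apply Rabs_le.
    replace (INR (Z.to_nat (z mod Zn)) / INR N + IZR (z / Zn) - c) with ((IZR z - INR N * c) / INR N)
      by (rewrite Hzdec; field; lra).
    split; apply Rmult_le_reg_r with (INR N); try lra; unfold Rdiv;
      field_simplify; lra.
Qed.

Definition ell (b l0 : nat) : R := / INR b ^ l0.

Lemma g_i_eq b l0 i s :
  g_i b l0 i s = hbar (ell b l0) (s - INR i / INR b ^ (l0 + 3) - (ell b l0 - 1) / 2).
Proof. unfold g_i, ell. f_equal. lra. Qed.

Section GridTents.

Variables (b l0 : nat).
Hypothesis Hell : 0 < ell b l0 < 1.

Lemma g_i_abs_le i s : Rabs (g_i b l0 i s) <= / 2.
Proof. rewrite g_i_eq. now apply hbar_abs_le. Qed.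

Lemma g_i_increment_ge i s1 s2 : s1 <= s2 ->
  g_i b l0 i s2 - g_i b l0 i s1 >= - (s2 - s1) / (1 - ell b l0).
Proof.
  intros Hs. rewrite !g_i_eq.
  match goal with |- hbar _ ?y - hbar _ ?x >= _ =>
    replace (s2 - s1) with (y - x) by ring end.
  apply hbar_increment_ge; [exact Hell | lra].
Qed.

Lemma g_i_steep i (n : Z) s :
  let p := INR i / INR b ^ (l0 + 3) + IZR n in
  p <= s <= p + ell b l0 -> g_i b l0 i s = (s - p) / ell b l0 - / 2.
Proof.
  intros p Hs. rewrite g_i_eq. unfold p in *. set (r := INR i / INR b ^ (l0 + 3)) in *.
  rewrite (hbar_steep _ Hell _ n) by lra. field. apply Rgt_not_eq, Hell.
Qed.

(* The steep segments of the [g_i] start on the grid [b^-(l0+3) Z]; one of them is centred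
   on [(u+v)/2] up to half a grid step, i.e. up to [ell / (2 b^3)]. *)
Lemma exists_g_i_increment_ge (u v : R) : (1 < b)%nat -> u < v -> v - u <= ell b l0 ->
  exists i, (i < b ^ (l0 + 3))%nat /\
    g_i b l0 i v - g_i b l0 i u
      >= (v - u) / ell b l0 * (1 - / (2 * (1 - ell b l0) * (INR b ^ 3 - 1))).
Proof.
  intros Hb Huv Hd.
  assert (HB3 : 1 < INR b ^ 3) by (apply Rlt_pow_R1; [apply (lt_INR 1) | ]; lia).
  destruct (exists_grid_point (b ^ (l0 + 3)) ((u + v) / 2 - ell b l0 / 2))
    as [i [n [Hi Hgrid]]]; [apply Nat.neq_0_lt_0, Nat.pow_nonzero; lia|].
  exists i. split; [exact Hi|].
  apply (centered_steep_increment_ge (g_i b l0 i) _ (INR i / INR b ^ (l0 + 3) + IZR n));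
    try assumption.
  - intros; now apply g_i_increment_ge.
  - apply g_i_steep.
  - rewrite pow_INR in Hgrid.
    replace (ell b l0 / (2 * INR b ^ 3)) with (/ (2 * INR b ^ (l0 + 3)))
      by (assert (INR b <> 0) by (apply not_0_INR; lia);
          unfold ell; rewrite pow_add; field; auto using pow_nonzero).
    replace (INR i / INR b ^ (l0 + 3) + IZR n + ell b l0 / 2 - (u + v) / 2)
      with (INR i / INR b ^ (l0 + 3) + IZR n - ((u + v) / 2 - ell b l0 / 2)) by ring.
    exact Hgrid.
Qed.

End GridTents.

Lemma ex_series_Rabs_le (a b : nat -> R) :
  (forall n, Rabs (a n) <= b n) -> ex_series b -> ex_series a.
Proof.
  intros Hab. apply (@ex_series_le R_AbsRing R_CompleteNormedModule).
  intros n. apply Hab.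
Qed.

Lemma series_tail_ge (t : nat -> R) (th : R) (N : nat) : 0 < th < 1 ->
  (forall k, Rabs (t k) <= th ^ k) ->
  Series (fun k => t (N + k)%nat) >= - (th ^ N / (1 - th)).
Proof.
  intros Hth Ht.
  assert (Hb : forall k, Rabs (t (N + k)%nat) <= th ^ N * th ^ k)
    by (intros k; rewrite <- pow_add; apply Ht).
  assert (Hg : ex_series (fun k => th ^ N * th ^ k)).
  { apply (ex_series_scal_l (th ^ N) (fun k => th ^ k)).
    apply ex_series_geom. rewrite Rabs_pos_eq; lra. }
  assert (He : ex_series (fun k => Rabs (t (N + k)%nat))).
  { apply ex_series_Rabs_le with (2 := Hg). intros k. rewrite Rabs_Rabsolu. apply Hb. }
  assert (Habs := Series_Rabs _ He). apply Rabs_le_between in Habs.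
  assert (Hle : Series (fun k => Rabs (t (N + k)%nat)) <= Series (fun k => th ^ N * th ^ k))
    by (apply Series_le; auto; intros k; split; [apply Rabs_pos | apply Hb]).
  rewrite Series_scal_l, Series_geom in Hle by (rewrite Rabs_pos_eq; lra).
  unfold Rdiv. lra.
Qed.

Lemma sum_f_R0_ge_one_term (t e : nat -> R) (K n : nat) (m : R) :
  (forall k, t k >= - e k) -> (forall k, 0 <= e k) -> t K >= m -> (K <= n)%nat ->
  sum_f_R0 t n >= m - sum_f_R0 e n.
Proof.
  intros Hte He HK.
  assert (Hall : forall j, sum_f_R0 t j >= - sum_f_R0 e j).
  { induction j as [|j IHj]; simpl; [apply Hte|]. specialize (Hte (S j)). lra. }
  induction n as [|n IH]; intros Hn; simpl.
  - replace K with 0%nat in HK by lia. specialize (He 0%nat). lra.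
  - destruct (Nat.eq_dec K (S n)) as [->|HKn].
    + specialize (Hall n). specialize (He (S n)). lra.
    + specialize (IH ltac:(lia)). specialize (Hte (S n)). specialize (He (S n)). lra.
Qed.

Lemma sum_f_R0_geom_le (c q : R) (n : nat) : 0 <= c -> 1 < q ->
  sum_f_R0 (fun k => q ^ k * c) n <= c * (q ^ S n / (q - 1)).
Proof.
  intros Hc Hq. rewrite <- scal_sum. apply Rmult_le_compat_l; [exact Hc|].
  assert (Hgp := GP_finite q n). rewrite Nat.add_1_r in Hgp.
  apply Rmult_le_reg_r with (q - 1); [lra|]. change (pow q) with (fun k => q ^ k). rewrite Hgp.
  unfold Rdiv. rewrite Rmult_assoc, Rinv_l by lra. lra.
Qed.

Lemma Wfun_sub_eq (alpha B : R) (G : R -> R) (x y : R) : 1 < B -> 0 < alpha ->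
  (forall s, Rabs (G s) <= / 2) ->
  Wfun alpha B G y - Wfun alpha B G x
    = Series (fun k => Rpower B (- alpha) ^ k * (G (B ^ k * y) - G (B ^ k * x))).
Proof.
  intros HB Ha HG. destruct (Rpower_neg_bounds B alpha HB Ha) as [Hth0 Hth1].
  assert (Hex : forall w, ex_series (fun k => Rpower B (- alpha * INR k) * G (B ^ k * w))).
  { intros w. apply ex_series_Rabs_le with (b := fun k => Rpower B (- alpha) ^ k).
    - intros k. rewrite Rpower_mul_INR, Rabs_mult, Rabs_pos_eq by (apply pow_le; lra).
      assert (0 <= Rpower B (- alpha) ^ k) by (apply pow_le; lra).
      specialize (HG (B ^ k * w)). nra.
    - apply ex_series_geom. rewrite Rabs_pos_eq; lra. }
  unfold Wfun. rewrite <- Series_minus by apply Hex.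
  apply Series_ext. intros k. rewrite Rpower_mul_INR. ring.
Qed.

(* The term at scale [K] gains [M]; below scale [N] every term loses at most its one-sided
   Lipschitz bound, beyond it at most [th^k] since [|G| <= 1/2]. *)
Lemma Wfun_increment_ge (B alpha m M : R) (G : R -> R) (x y : R) (K N : nat) :
  1 < B -> 0 < alpha < 1 -> 0 < m ->
  (forall s, Rabs (G s) <= / 2) ->
  (forall a c, a <= c -> G c - G a >= - (c - a) / m) ->
  x <= y -> (K < N)%nat -> G (B ^ K * y) - G (B ^ K * x) >= M ->
  let th := Rpower B (- alpha) in
  let q := Rpower B (1 - alpha) in
  Wfun alpha B G y - Wfun alpha B G x
    >= th ^ K * M - (y - x) / m * (q ^ N / (q - 1)) - th ^ N / (1 - th).
Proof.
  intros HB Ha Hm HG HGinc Hxy HKN HM th q.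
  assert (Hth : 0 < th < 1) by (apply Rpower_neg_bounds; lra).
  assert (Hq : q = th * B) by (apply Rpower_one_sub; lra).
  assert (Hq1 : 1 < q) by (apply Rpower_gt_1; lra).
  rewrite Wfun_sub_eq by (assumption || lra). fold th.
  set (t := fun k => th ^ k * (G (B ^ k * y) - G (B ^ k * x))).
  set (e := fun k => q ^ k * ((y - x) / m)).
  assert (Ht : forall j, Rabs (t j) <= th ^ j).
  { intros j. unfold t. rewrite Rabs_mult, Rabs_pos_eq by (apply pow_le; lra).
    assert (H := Rabs_triang (G (B ^ j * y)) (- G (B ^ j * x))). rewrite Rabs_Ropp in H.
    assert (Hy := HG (B ^ j * y)). assert (Hx := HG (B ^ j * x)).
    assert (0 <= th ^ j) by (apply pow_le; lra). unfold Rminus. nra. }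
  assert (Hte : forall j, t j >= - e j).
  { intros j. unfold t, e. rewrite Hq, Rpow_mult_distr.
    assert (HBj : 0 < B ^ j) by (apply pow_lt; lra).
    assert (Hj := HGinc (B ^ j * x) (B ^ j * y) ltac:(nra)).
    apply Rmult_ge_compat_l with (r := th ^ j) in Hj; [|left; apply pow_lt; lra].
    replace (th ^ j * B ^ j * ((y - x) / m)) with (- (th ^ j * (- (B ^ j * y - B ^ j * x) / m)))
      by (field; lra). lra. }
  assert (He : forall j, 0 <= e j).
  { intros j. apply Rmult_le_pos; [apply pow_le|apply Rdiv_le_0_compat]; lra. }
  assert (HtK : t K >= th ^ K * M) by (apply Rmult_ge_compat_l; [left; apply pow_lt|]; lra).
  rewrite (Series_incr_n t N)
    by (lia || apply (ex_series_Rabs_le _ _ Ht), ex_series_geom; rewrite Rabs_pos_eq; lra).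
  assert (Hsum := sum_f_R0_ge_one_term t e K (pred N) (th ^ K * M) Hte He HtK ltac:(lia)).
  assert (Htail := series_tail_ge t th N Hth Ht).
  assert (Hgeom := sum_f_R0_geom_le ((y - x) / m) q (pred N) ltac:(apply Rdiv_le_0_compat; lra) Hq1).
  replace (S (pred N)) with N in Hgeom by lia.
  fold e in Hgeom. lra.
Qed.

Lemma exp_le_inv_pow x n : (0 < n)%nat -> x < INR n -> exp x <= (/ (1 - x / INR n)) ^ n.
Proof.
  intros Hn Hx. assert (HnR : 0 < INR n) by (apply lt_0_INR; lia).
  replace x with (INR n * (x / INR n)) at 1 by (field; lra).
  rewrite <- exp_pow_INR. apply pow_incr. split; [left; apply exp_pos|].
  set (s := x / INR n). assert (Hs : s < 1) by (unfold s; apply Rmult_lt_reg_r with (INR n); [lra|];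
    unfold Rdiv; rewrite Rmult_assoc, Rinv_l; lra).
  assert (H1 := exp_ineq1_le (- s)).
  assert (Hinv : exp s * exp (- s) = 1) by (rewrite <- exp_plus, Rplus_opp_r; apply exp_0).
  assert (0 < exp s) by apply exp_pos.
  apply Rmult_le_reg_r with (1 - s); [lra|]. rewrite Rinv_l by lra. nra.
Qed.

Lemma pow_le_exp x n : 0 <= x -> (1 + x / INR n) ^ n <= exp x.
Proof.
  intros Hx. destruct n as [|n]; [simpl; assert (H := exp_ineq1_le x); lra|].
  assert (HnR : 0 < INR (S n)) by (apply lt_0_INR; lia).
  replace x with (INR (S n) * (x / INR (S n))) at 2 by (field; lra).
  rewrite <- exp_pow_INR. apply pow_incr. split; [|apply exp_ineq1_le].
  assert (0 <= x / INR (S n)) by (apply Rdiv_le_0_compat; lra). lra.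
Qed.

Lemma ln_le_div_exp1 z : 0 < z -> ln z <= z / exp 1.
Proof.
  intros Hz. assert (He := exp_pos 1).
  assert (Hz' : 0 < z / exp 1) by (apply Rdiv_lt_0_compat; auto).
  assert (H := exp_ineq1_le (ln (z / exp 1))). rewrite exp_ln in H by auto.
  unfold Rdiv in *. rewrite ln_mult, ln_Rinv, ln_exp in H by (try apply Rinv_0_lt_compat; auto).
  lra.
Qed.

Lemma mul_ln_div_le c k : 0 < c -> 0 < k -> c * ln (k / c) <= k / exp 1.
Proof.
  intros Hc Hk. assert (He := exp_pos 1).
  apply Rle_trans with (c * (k / c / exp 1)).
  - apply Rmult_le_compat_l; [lra|]. apply ln_le_div_exp1, Rdiv_lt_0_compat; lra.
  - right. field. lra.
Qed.

Lemma Rpower_inv_INR_pow a n : 0 < a -> (0 < n)%nat -> Rpower a (/ INR n) ^ n = a.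
Proof.
  intros Ha Hn. unfold Rpower. rewrite exp_pow_INR.
  replace (INR n * (/ INR n * ln a)) with (ln a) by (field; apply not_0_INR; lia).
  now apply exp_ln.
Qed.

Lemma Rpower_neg_nine_tenths_le a c : 1 < a -> 0 < c -> a < c ^ 10 ->
  Rpower a (- (9 / 10)) <= c / a.
Proof.
  intros Ha Hc Hac.
  replace (- (9 / 10)) with (/ INR 10 + Ropp 1) by (simpl; field).
  rewrite Rpower_plus, Rpower_Ropp, Rpower_1 by lra. unfold Rdiv.
  apply Rmult_le_compat_r; [left; apply Rinv_0_lt_compat; lra|].
  destruct (Rlt_or_le c (Rpower a (/ INR 10))) as [Hlt|]; [|assumption].
  exfalso. assert (H : c ^ 10 <= Rpower a (/ INR 10) ^ 10) by (apply pow_incr; lra).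
  rewrite Rpower_inv_INR_pow in H by (lra || lia). lra.
Qed.

Lemma ln2_gt : 2 / 3 < ln 2.
Proof.
  assert (H : exp (2 / 3) < 2).
  { apply Rle_lt_trans with ((/ (1 - 2 / 3 / INR 16)) ^ 16).
    - apply exp_le_inv_pow; simpl; lra || lia.
    - simpl. lra. }
  rewrite <- (ln_exp (2 / 3)). apply ln_increasing; [apply exp_pos | exact H].
Qed.

Lemma exp1_gt : 269 / 100 < exp 1.
Proof.
  apply Rlt_le_trans with ((1 + 1 / INR 64) ^ 64); [simpl; lra|].
  apply pow_le_exp. lra.
Qed.

Lemma log2_10_ge : 33 / 10 <= log2 10.
Proof.
  unfold log2. assert (H2 := ln2_gt).
  assert (33 * ln 2 <= 10 * ln 10).
  { replace (33 * ln 2) with (INR 33 * ln 2) by (simpl; ring).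
    replace (10 * ln 10) with (INR 10 * ln 10) by (simpl; ring).
    rewrite <- !ln_pow by lra. left. apply ln_increasing; [apply pow_lt; lra | simpl; lra]. }
  apply Rmult_le_reg_r with (ln 2); [lra|].
  replace (ln 10 / ln 2 * ln 2) with (ln 10) by (field; lra). lra.
Qed.

Lemma log2_one_sub_Rpower2_neg a : 0 < a -> log2 (1 - Rpower 2 (- a)) < 0.
Proof.
  intros Ha. destruct (Rpower_neg_bounds 2 a ltac:(lra) Ha). assert (H2 := ln2_gt). unfold log2.
  apply Rlt_div_l; [lra|]. rewrite Rmult_0_l, <- ln_1. apply ln_increasing; lra.
Qed.

Lemma alpha_mul_C_alpha_ge a : 0 < a < 1 ->
  12 - log2 (1 - Rpower 2 (- a)) <= a * C_alpha a.
Proof.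
  intros Ha. assert (H10 := log2_10_ge).
  replace (a * C_alpha a) with (10 / 3 * log2 10 - log2 (1 - Rpower 2 (- a)) + 2 - a)
    by (unfold C_alpha; field; lra).
  lra.
Qed.

Lemma C_alpha_gt a : 0 < a < 1 -> 12 < C_alpha a.
Proof.
  intros Ha. assert (H := alpha_mul_C_alpha_ge a Ha).
  assert (Hl := log2_one_sub_Rpower2_neg a (proj1 Ha)).
  destruct (Rle_or_lt (C_alpha a) 12); [nra | assumption].
Qed.

Lemma C_alpha_exponent_le a t : 0 < a < 1 -> ln 2 / 2 <= t ->
  24 * t - 2 * (a * C_alpha a) * t <= ln (1 - Rpower 2 (- a)).
Proof.
  intros Ha Ht. assert (H := alpha_mul_C_alpha_ge a Ha).
  assert (Hl := log2_one_sub_Rpower2_neg a (proj1 Ha)). assert (H2 := ln2_gt).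
  replace (ln (1 - Rpower 2 (- a))) with (log2 (1 - Rpower 2 (- a)) * ln 2)
    by (unfold log2; field; lra).
  nra.
Qed.

(* The three error terms get the budget [9/10 - 7/(10 q)]; the last tenth absorbs the grid
   loss [1/(2(1-l)(m-1)) <= 0.072] and the factor [1/(1-l) <= 480/479]. *)
Lemma budget_suffices (l m E q th : R) :
  0 < l < / 480 -> 8 <= m -> 1 < q -> 0 < th < 1 -> 0 <= E ->
  E * q / (q - 1) + E * q / (1 - th) + 7 / 10 / q <= 9 / 10 ->
  1 - / (2 * (1 - l) * (m - 1)) - E * q / ((q - 1) * (1 - l)) - E * q / (1 - th)
    >= 7 / 10 / q.
Proof.
  intros Hl Hm Hq Hth HE Hbudget.
  assert (HT2 : 0 <= E * q / (q - 1)) by (apply Rdiv_le_0_compat; nra).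
  assert (HT3 : 0 <= E * q / (1 - th)) by (apply Rdiv_le_0_compat; nra).
  assert (Hq7 : 0 <= 7 / 10 / q) by (apply Rdiv_le_0_compat; lra).
  assert (Hm' : / (2 * (1 - l) * (m - 1)) <= 480 / 6706).
  { replace (480 / 6706) with (/ (6706 / 480)) by field.
    apply Rinv_le_contravar; nra. }
  assert (Hl' : / (1 - l) <= 480 / 479).
  { replace (480 / 479) with (/ (479 / 480)) by field. apply Rinv_le_contravar; lra. }
  replace (E * q / ((q - 1) * (1 - l))) with (E * q / (q - 1) * / (1 - l)) by (field; lra).
  assert (E * q / (q - 1) * / (1 - l) <= E * q / (q - 1) * (480 / 479))
    by (apply Rmult_le_compat_l; lra).
  lra.
Qed.

Lemma budget_large_q (E q th : R) : 1 < q -> 2 <= q * q -> 0 < th < 1 -> 0 <= E ->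
  E * q ^ 24 <= 1 - th ->
  E * q / (q - 1) + E * q / (1 - th) + 7 / 10 / q <= 9 / 10.
Proof.
  intros Hq Hq2 Hth HE Hw.
  assert (H23 : 2048 <= q ^ 23).
  { apply Rle_trans with ((q * q) ^ 11).
    - apply Rle_trans with (2 ^ 11); [simpl; lra | apply pow_incr; lra].
    - replace ((q * q) ^ 11) with (q ^ 22) by ring. replace 23%nat with (S 22) by lia.
      simpl pow at 2. assert (0 <= q ^ 22) by (apply pow_le; lra). nra. }
  assert (HEq : E * q * 2048 <= 1 - th).
  { replace (E * q ^ 24) with (E * q * q ^ 23) in Hw by ring. nra. }
  assert (Hq14 : 1414 / 1000 <= q) by nra.
  assert (HT2 : E * q / (q - 1) <= / 2048 / (414 / 1000)).
  { apply Rle_div_l; lra. }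
  assert (HT3 : E * q / (1 - th) <= / 2048) by (apply Rle_div_l; lra).
  assert (Hq7 : 7 / 10 / q <= 7 / 10 / (1414 / 1000)).
  { apply Rmult_le_compat_l; [lra|]. apply Rinv_le_contravar; lra. }
  lra.
Qed.

Lemma budget_mid_q (E q th : R) : 16 / 15 <= q -> 0 < th <= 7072 / 10000 -> 0 <= E ->
  E * q ^ 24 <= 10 / 219 ->
  E * q / (q - 1) + E * q / (1 - th) + 7 / 10 / q <= 9 / 10.
Proof.
  intros Hq Hth HE Hw.
  assert (H23 : 441 / 100 <= q ^ 23).
  { apply Rle_trans with ((16 / 15) ^ 23); [simpl; lra | apply pow_incr; lra]. }
  assert (HEq : E * q * (441 / 100) <= 10 / 219).
  { replace (E * q ^ 24) with (E * q * q ^ 23) in Hw by ring.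
    assert (0 <= E * q) by nra. nra. }
  assert (HT2 : E * q / (q - 1) <= 10 / 219 / (441 / 100) * 15) by (apply Rle_div_l; lra).
  assert (HT3 : E * q / (1 - th) <= 10 / 219 / (441 / 100) / (2928 / 10000))
    by (apply Rle_div_l; lra).
  assert (Hq7 : 7 / 10 / q <= 7 / 10 / (16 / 15)).
  { apply Rmult_le_compat_l; [lra|]. apply Rinv_le_contravar; lra. }
  lra.
Qed.

Lemma budget_small_q (E q th : R) : 1 < q -> q * q < 2 -> 0 < th <= 625 / 1000 ->
  0 <= E <= 186 / 100 / 480 -> E / (q - 1) <= 179 / 100 * (135 / 100 / 20) ->
  E * q / (q - 1) + E * q / (1 - th) + 7 / 10 / q <= 9 / 10.
Proof.
  intros Hq Hq2 Hth HE HEq.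
  assert (HT2 : E * q / (q - 1) <= 179 / 100 * (135 / 100 / 20) * q).
  { replace (E * q / (q - 1)) with (E / (q - 1) * q) by (field; lra).
    apply Rmult_le_compat_r; lra. }
  assert (HT3 : E * q / (1 - th) <= 186 / 100 / 480 / (375 / 1000) * q).
  { apply Rle_div_l; [lra|]. nra. }
  assert (Hq7 : 7 / 10 / q * q = 7 / 10) by (field; lra).
  assert (Hq14 : q < 14143 / 10000) by nra.
  assert (7 / 10 / q <= 9 / 10 - (179 / 100 * (135 / 100 / 20) + 186 / 100 / 480 / (375 / 1000)) * q).
  { apply Rmult_le_reg_r with q; [lra|]. nra. }
  lra.
Qed.

(* [l^a / s < 20^-a s^-(1-a)] and [s^-(1-a) <= (3/(2(1-a)))^(1-a) <= e^(3/(2e))]. *)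
Lemma Rpower_div_le (l s a : R) : 0 < l -> 0 < a < 1 -> 2 * (1 - a) / 3 <= s -> l < s / 20 ->
  Rpower l a / s <= exp (3 / 2 / exp 1) * Rpower 20 (- a).
Proof.
  intros Hl Ha Hs Hls. assert (Hs0 : 0 < s) by lra.
  unfold Rpower. unfold Rdiv at 1. rewrite <- (exp_ln s) by lra.
  rewrite <- exp_Ropp, <- !exp_plus. apply exp_le_compat.
  assert (Hln : ln l < ln s - ln 20).
  { rewrite <- ln_div by lra. apply ln_increasing; lra. }
  assert (Hk := mul_ln_div_le (1 - a) (3 / 2) ltac:(lra) ltac:(lra)).
  assert (Hsk : - ln ((3 / 2) / (1 - a)) <= ln s).
  { rewrite <- ln_Rinv by (apply Rdiv_lt_0_compat; lra).
    apply ln_le_compat; [apply Rinv_0_lt_compat, Rdiv_lt_0_compat; lra|].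
    replace (/ (3 / 2 / (1 - a))) with (2 * (1 - a) / 3) by (field; lra). lra. }
  nra.
Qed.

Section NumericBudget.

Variables (B a : R) (L : nat).
Hypothesis HB : 2 <= B.
Hypothesis Ha : 0 < a < 1.
Hypothesis HL_slope : B ^ L > 20 / (Rpower B (1 - a) - 1).
Hypothesis HL_C : B ^ L > 40 * C_alpha a * Rpower B (2 * C_alpha a * (1 - a)).

(* With [t = (1-a) ln B] and [Lam = L ln B]: [q = e^t], [E = e^(-a Lam)], [B^-L = e^(-Lam)].
   The budget is checked separately for [q^2 >= 2], and for [q^2 < 2] with [a] below or
   above [9/10]. *)
Let th := Rpower B (- a).
Let q := Rpower B (1 - a).
Let E := th ^ L.
Let t := (1 - a) * ln B.
Let Lam := INR L * ln B.

Lemma ln_B_ge_ln2 : ln 2 <= ln B.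
Proof. apply ln_le_compat; lra. Qed.

Lemma q_gt_1 : 1 < q.
Proof. apply Rpower_gt_1; lra. Qed.

Lemma E_eq_exp : E = exp (- a * Lam).
Proof. unfold E, th, Rpower, Lam. rewrite exp_pow_INR. f_equal. ring. Qed.

Lemma B_pow_L_eq_exp : B ^ L = exp Lam.
Proof. unfold Lam. rewrite <- exp_pow_INR, exp_ln by lra. reflexivity. Qed.

Lemma exp_neg_Lam_lt : exp (- Lam) < (q - 1) / 20.
Proof.
  assert (Hq := q_gt_1). rewrite exp_Ropp, <- B_pow_L_eq_exp.
  assert (HBL : 0 < B ^ L) by (apply pow_lt; lra).
  apply (Rmult_lt_reg_r (20 / (q - 1) * B ^ L)); [apply Rmult_lt_0_compat; [apply Rdiv_lt_0_compat|]; lra|].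
  replace (/ B ^ L * (20 / (q - 1) * B ^ L)) with (20 / (q - 1)) by (field; lra).
  replace ((q - 1) / 20 * (20 / (q - 1) * B ^ L)) with (B ^ L) by (field; lra).
  exact HL_slope.
Qed.

Lemma Lam_gt : ln (40 * C_alpha a) + 2 * C_alpha a * t < Lam.
Proof.
  assert (HC := C_alpha_gt a Ha).
  assert (H := HL_C). rewrite B_pow_L_eq_exp in H. unfold Rpower in H.
  apply ln_increasing in H; [|apply Rmult_lt_0_compat; [lra | apply exp_pos]].
  rewrite ln_exp, ln_mult, ln_exp in H by (lra || apply exp_pos).
  unfold t. lra.
Qed.

Lemma q_eq_exp : q = exp t.
Proof. reflexivity. Qed.

Lemma t_ge_two_thirds : (1 - a) * (2 / 3) <= t.
Proof. assert (H := ln_B_ge_ln2). assert (H2 := ln2_gt). unfold t. nra. Qed.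

Lemma a_Lam_gt : a * ln 480 + 2 * (a * C_alpha a) * t < a * Lam.
Proof.
  assert (HC := C_alpha_gt a Ha). assert (HL := Lam_gt).
  assert (ln 480 < ln (40 * C_alpha a)) by (apply ln_increasing; lra).
  nra.
Qed.

Lemma E_mul_q_pow_eq_exp n : E * q ^ n = exp (- a * Lam + INR n * t).
Proof. rewrite E_eq_exp, q_eq_exp, exp_pow_INR, exp_plus. reflexivity. Qed.

Lemma budget_large_t : ln 2 / 2 <= t ->
  E * q / (q - 1) + E * q / (1 - th) + 7 / 10 / q <= 9 / 10.
Proof.
  intros Ht. assert (H2 := ln2_gt). assert (HaL := a_Lam_gt).
  assert (H2a := Rpower_neg_bounds 2 a ltac:(lra) (proj1 Ha)).
  assert (Hth : 0 < th <= Rpower 2 (- a)).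
  { split; [apply exp_pos|]. unfold th, Rpower. apply exp_le_compat.
    assert (Hl := ln_B_ge_ln2). nra. }
  assert (HE : 0 <= E) by (rewrite E_eq_exp; left; apply exp_pos).
  apply budget_large_q; [apply q_gt_1 | | lra | exact HE |].
  - rewrite q_eq_exp, <- exp_plus, <- (exp_ln 2) by lra. apply exp_le_compat. lra.
  - rewrite E_mul_q_pow_eq_exp.
    apply Rle_trans with (exp (ln (1 - Rpower 2 (- a)))); [|rewrite exp_ln; lra].
    apply exp_le_compat. assert (Hx := C_alpha_exponent_le a t Ha Ht).
    assert (0 < ln 480) by (rewrite <- ln_1; apply ln_increasing; lra).
    simpl INR. nra.
Qed.

Lemma alpha_gt_half : t < ln 2 / 2 -> / 2 < a.
Proof.
  intros Ht. assert (H := ln_B_ge_ln2). assert (H2 := ln2_gt). unfold t in Ht.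
  destruct (Rle_or_lt a (/ 2)); [nra | assumption].
Qed.

Lemma budget_small_t_mid_alpha : t < ln 2 / 2 -> a <= 9 / 10 ->
  E * q / (q - 1) + E * q / (1 - th) + 7 / 10 / q <= 9 / 10.
Proof.
  intros Ht Ha9. assert (Ha2 := alpha_gt_half Ht). assert (H2 := ln2_gt).
  assert (HaL := a_Lam_gt). assert (HaC := alpha_mul_C_alpha_ge a Ha).
  assert (Hlog := log2_one_sub_Rpower2_neg a (proj1 Ha)). assert (Hlb := ln_B_ge_ln2).
  assert (Hsqrt : forall z, 0 < z -> exp (ln z / 2) ^ 2 = z).
  { intros z Hz. rewrite exp_pow_INR. simpl INR. replace ((1 + 1) * (ln z / 2)) with (ln z) by field.
    now apply exp_ln. }
  apply budget_mid_q.
  - rewrite q_eq_exp. assert (H := exp_ineq1_le t). assert (Ht' := t_ge_two_thirds). lra.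
  - split; [apply exp_pos|].
    assert (Hr := Hsqrt 2 ltac:(lra)). assert (0 < exp (ln 2 / 2)) by apply exp_pos.
    apply Rle_trans with (/ exp (ln 2 / 2)).
    + unfold th, Rpower. rewrite <- exp_Ropp. apply exp_le_compat. nra.
    + replace (7072 / 10000) with (/ (10000 / 7072)) by field.
      apply Rinv_le_contravar; [lra | simpl in Hr; nra].
  - rewrite E_eq_exp. left. apply exp_pos.
  - rewrite E_mul_q_pow_eq_exp.
    assert (Hr := Hsqrt 480 ltac:(lra)). assert (0 < exp (ln 480 / 2)) by apply exp_pos.
    assert (0 < ln 480) by (rewrite <- ln_1; apply ln_increasing; lra).
    apply Rle_trans with (/ exp (ln 480 / 2)).
    + rewrite <- exp_Ropp. apply exp_le_compat. assert (Ht' := t_ge_two_thirds).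
      assert (0 <= (a - / 2) * ln 480) by (apply Rmult_le_pos; lra).
      assert (0 <= (a * C_alpha a - 12) * t) by (apply Rmult_le_pos; lra).
      simpl INR. lra.
    + replace (10 / 219) with (/ (219 / 10)) by field.
      apply Rinv_le_contravar; [lra | simpl in Hr; nra].
Qed.

Lemma budget_small_t_large_alpha : t < ln 2 / 2 -> 9 / 10 < a ->
  E * q / (q - 1) + E * q / (1 - th) + 7 / 10 / q <= 9 / 10.
Proof.
  intros Ht Ha9. assert (H2 := ln2_gt). assert (Hlb := ln_B_ge_ln2). assert (Hq := q_gt_1).
  assert (HL := Lam_gt). assert (HC := C_alpha_gt a Ha). assert (Ht' := t_ge_two_thirds).
  assert (H480 : ln 480 < Lam).
  { assert (ln 480 < ln (40 * C_alpha a)) by (apply ln_increasing; lra).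
    assert (0 <= t) by lra. nra. }
  apply budget_small_q; [exact Hq | | | |].
  - rewrite q_eq_exp, <- exp_plus, <- (exp_ln 2) by lra. apply exp_increasing. lra.
  - split; [apply exp_pos|]. unfold th, Rpower.
    apply Rle_trans with (exp (- (3 / 5))); [apply exp_le_compat; nra|].
    rewrite exp_Ropp. replace (625 / 1000) with (/ (16 / 10)) by field.
    apply Rinv_le_contravar; [lra|].
    apply Rle_trans with ((1 + 3 / 5 / INR 2) ^ 2); [simpl; lra | apply pow_le_exp; lra].
  - rewrite E_eq_exp. split; [left; apply exp_pos|].
    apply Rle_trans with (Rpower 480 (- (9 / 10))).
    + unfold Rpower. apply exp_le_compat.
      assert (0 < ln 480) by (rewrite <- ln_1; apply ln_increasing; lra).
      assert (0 <= (a - 9 / 10) * Lam) by (apply Rmult_le_pos; lra). lra.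
    + apply Rpower_neg_nine_tenths_le; [lra | lra | simpl; lra].
  - rewrite E_eq_exp. replace (exp (- a * Lam)) with (Rpower (exp (- Lam)) a)
      by (unfold Rpower; rewrite ln_exp; f_equal; ring).
    assert (Hq1 : 1 + t <= q) by (rewrite q_eq_exp; apply exp_ineq1_le).
    eapply Rle_trans; [apply Rpower_div_le; [apply exp_pos | lra | lra | apply exp_neg_Lam_lt]|].
    assert (He := exp1_gt). apply Rmult_le_compat.
    + left; apply exp_pos.
    + left; apply exp_pos.
    + apply Rle_trans with (exp (3 / 2 / (269 / 100))).
      * apply exp_le_compat. apply Rmult_le_compat_l; [lra|]. apply Rinv_le_contravar; lra.
      * apply Rle_trans with ((/ (1 - 3 / 2 / (269 / 100) / INR 8)) ^ 8);
          [apply exp_le_inv_pow; simpl; lra || lia | simpl; lra].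
    + apply Rle_trans with (Rpower 20 (- (9 / 10))); [apply Rle_Rpower; lra|].
      apply Rpower_neg_nine_tenths_le; [lra | lra | simpl; lra].
Qed.

Lemma B_pow_L_gt_480 : 480 < B ^ L.
Proof.
  assert (HC := C_alpha_gt a Ha).
  assert (HR : 1 <= Rpower B (2 * C_alpha a * (1 - a))).
  { rewrite <- (Rpower_O B) at 1 by lra. apply Rle_Rpower; [lra|].
    apply Rmult_le_pos; lra. }
  nra.
Qed.

Lemma numeric_estimate :
  1 - / (2 * (1 - / B ^ L) * (B ^ 3 - 1)) - E * q / ((q - 1) * (1 - / B ^ L))
    - E * q / (1 - th) >= 7 / 10 / q.
Proof.
  assert (HBL := B_pow_L_gt_480).
  apply budget_suffices.
  - split; [apply Rinv_0_lt_compat; lra | apply Rinv_lt_contravar; nra].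
  - apply Rle_trans with (2 ^ 3); [simpl; lra | apply pow_incr; lra].
  - apply q_gt_1.
  - apply Rpower_neg_bounds; lra.
  - rewrite E_eq_exp. left. apply exp_pos.
  - destruct (Rle_or_lt (ln 2 / 2) t) as [Ht|Ht]; [now apply budget_large_t|].
    destruct (Rle_or_lt a (9 / 10)).
    + now apply budget_small_t_mid_alpha.
    + now apply budget_small_t_large_alpha.
Qed.

End NumericBudget.

Lemma exists_scale (B c : R) : 1 < B -> 0 < c <= 1 -> exists K : nat, / B < B ^ K * c <= 1.
Proof.
  intros HB Hc.
  destruct (Pow_x_infinity B ltac:(rewrite Rabs_pos_eq; lra) (2 / c)) as [n Hn].
  specialize (Hn n (le_n n)). rewrite Rabs_pos_eq in Hn by (apply pow_le; lra).
  assert (Hbig : 1 < B ^ n * c).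
  { apply Rge_le, (Rmult_le_compat_r c) in Hn; [|lra].
    replace (2 / c * c) with 2 in Hn by (field; lra). lra. }
  clear Hn. induction n as [|n IH]; [simpl in Hbig; lra|].
  destruct (Rle_or_lt (B ^ n * c) 1) as [Hle|Hgt]; [|now apply IH].
  exists n. split; [|exact Hle].
  apply (Rmult_lt_reg_l B); [lra|]. rewrite Rinv_r by lra. simpl in Hbig. lra.
Qed.

Lemma exists_scale_g_i_increment_ge (b l0 : nat) (x y : R) : (1 < b)%nat ->
  0 < ell b l0 < 1 -> x < y -> y - x < ell b l0 / INR b ->
  exists K i, (i < b ^ (l0 + 3))%nat /\ / INR b < INR b ^ K * INR b ^ l0 * (y - x) /\
    g_i b l0 i (INR b ^ K * y) - g_i b l0 i (INR b ^ K * x)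
      >= INR b ^ K * INR b ^ l0 * (y - x) * (1 - / (2 * (1 - ell b l0) * (INR b ^ 3 - 1))).
Proof.
  intros Hb Hell Hxy Hd. assert (HB : 1 < INR b) by (apply (lt_INR 1); exact Hb).
  unfold ell in *. set (B := INR b) in *.
  assert (HBl0 : 0 < B ^ l0) by (apply pow_lt; lra).
  assert (Hc : 0 < (y - x) * B ^ l0 <= 1).
  { split; [nra|]. apply (Rmult_lt_compat_r (B ^ l0)) in Hd; [|lra].
    replace (/ B ^ l0 / B * B ^ l0) with (/ B) in Hd by (field; lra).
    assert (/ B <= 1) by (rewrite <- Rinv_1; apply Rinv_le_contravar; lra). lra. }
  destruct (exists_scale B _ ltac:(lra) Hc) as [K [HK1 HK2]].
  assert (HBK : 0 < B ^ K) by (apply pow_lt; lra).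
  assert (Hwidth : B ^ K * y - B ^ K * x <= / B ^ l0).
  { apply (Rmult_le_reg_r (B ^ l0)); [lra|]. rewrite Rinv_l by lra. nra. }
  destruct (exists_g_i_increment_ge b l0 Hell (B ^ K * x) (B ^ K * y)
              Hb ltac:(nra) Hwidth) as [i [Hi Hinc]].
  exists K, i. split; [exact Hi|]. split; [lra|].
  replace (B ^ K * B ^ l0 * (y - x)) with ((B ^ K * y - B ^ K * x) / / B ^ l0)
    by (field; lra).
  exact Hinc.
Qed.

(* With [rho = B^K B^L d] both sides are [7/10 B^(-a K) rho^a] times [B^(-2(1-a))],
   resp. [(rho/B)^(1-a)]. *)
Lemma stated_bound_le_gain (B a d : R) (K L : nat) : 1 < B -> 0 < a < 1 -> 0 < d ->
  / B < B ^ K * B ^ L * d ->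
  7 / 10 * Rpower B (a * INR L - 2 * (1 - a)) * Rpower d a
    <= Rpower B (- a) ^ K * (B ^ K * B ^ L * d) * (7 / 10 / Rpower B (1 - a)).
Proof.
  intros HB Ha Hd Hrho. set (rho := B ^ K * B ^ L * d) in *.
  assert (Hrho0 : 0 < rho) by (apply Rlt_trans with (/ B); [apply Rinv_0_lt_compat|]; lra).
  assert (Hlnd : ln d = ln rho - INR K * ln B - INR L * ln B).
  { unfold rho. rewrite !ln_mult, !ln_pow by (try apply Rmult_lt_0_compat; try apply pow_lt; lra).
    ring. }
  assert (Hlnrho : - ln B < ln rho).
  { rewrite <- ln_Rinv by lra. apply ln_increasing; [apply Rinv_0_lt_compat|]; lra. }
  unfold Rpower. rewrite exp_pow_INR, Hlnd.
  replace rho with (exp (ln rho)) at 2 by (apply exp_ln; lra).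
  apply Rle_trans with (7 / 10 * exp (INR K * (- a * ln B) + ln rho - (1 - a) * ln B)).
  - rewrite Rmult_assoc, <- exp_plus. apply Rmult_le_compat_l; [lra|].
    apply exp_le_compat. assert (0 < 1 - a) by lra. nra.
  - right. unfold Rminus. rewrite !exp_plus, exp_Ropp. field. apply Rgt_not_eq, exp_pos.
Qed.

Lemma gain_minus_losses_ge (B a d : R) (K L : nat) :
  1 < B -> 0 < a < 1 -> 0 < d -> 1 < B ^ L -> / B < B ^ K * B ^ L * d ->
  let th := Rpower B (- a) in let q := Rpower B (1 - a) in let l := / B ^ L in
  let eps := / (2 * (1 - l) * (B ^ 3 - 1)) in
  1 - eps - th ^ L * q / ((q - 1) * (1 - l)) - th ^ L * q / (1 - th) >= 7 / 10 / q ->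
  th ^ K * (B ^ K * B ^ L * d * (1 - eps)) - d / (1 - l) * (q ^ S (K + L) / (q - 1))
    - th ^ S (K + L) / (1 - th) >= th ^ K * (B ^ K * B ^ L * d) * (7 / 10 / q).
Proof.
  intros HB Ha Hd HBL Hrho th q l eps Hnum.
  set (rho := B ^ K * B ^ L * d) in *.
  assert (Hth : 0 < th < 1) by (apply Rpower_neg_bounds; lra).
  assert (Hq : q = th * B) by (apply Rpower_one_sub; lra).
  assert (Hq1 : 1 < q) by (apply Rpower_gt_1; lra).
  assert (Hl : 0 < l < 1).
  { split; [apply Rinv_0_lt_compat; lra|]. rewrite <- Rinv_1. apply Rinv_lt_contravar; lra. }
  assert (Hrho0 : 0 < rho) by (apply Rlt_trans with (/ B); [apply Rinv_0_lt_compat|]; lra).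
  set (P := th ^ K * rho).
  assert (HP : 0 < P) by (apply Rmult_lt_0_compat; [apply pow_lt|]; lra).
  set (T2 := th ^ L * q / ((q - 1) * (1 - l))) in *. set (T3 := th ^ L * q / (1 - th)) in *.
  assert (Hsum : d / (1 - l) * (q ^ S (K + L) / (q - 1)) = P * T2).
  { unfold P, rho, T2. rewrite Hq, <- tech_pow_Rmult, !Rpow_mult_distr, !pow_add.
    rewrite <- Hq. field. lra. }
  assert (Htail : th ^ S (K + L) / (1 - th) <= P * T3).
  { unfold P, T3. replace (th ^ K * rho * (th ^ L * q / (1 - th)))
      with (th ^ K * th ^ L * th * (rho * B) / (1 - th)) by (rewrite Hq; field; lra).
    rewrite <- tech_pow_Rmult, pow_add. apply Rmult_le_compat_r; [left; apply Rinv_0_lt_compat; lra|].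
    assert (0 < th ^ K * th ^ L * th) by (apply Rmult_lt_0_compat; [apply Rmult_lt_0_compat; apply pow_lt|]; lra).
    assert (1 <= rho * B) by (apply (Rmult_lt_compat_r B) in Hrho; [rewrite Rinv_l in Hrho|]; lra).
    replace (th * (th ^ K * th ^ L)) with (th ^ K * th ^ L * th) by ring. nra. }
  apply Rmult_ge_compat_l with (r := P) in Hnum; [|lra].
  replace (P * (1 - eps - T2 - T3)) with (P * (1 - eps) - P * T2 - P * T3) in Hnum by ring.
  replace (th ^ K * (rho * (1 - eps))) with (P * (1 - eps)) by (unfold P; ring).
  lra.
Qed.

Theorem mainTheorem4 (b : nat) (alpha : R) (l0 : nat) :
  (2 <= b)%nat -> 0 < alpha < 1 ->
  INR b ^ l0 > Rmax (20 / (Rpower (INR b) (1 - alpha) - 1))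
                    (40 * C_alpha alpha *
                     Rpower (INR b) (2 * C_alpha alpha * (1 - alpha))) ->
  forall x y : R, x < y -> y - x < / (INR b ^ (l0 + 1)) ->
  exists i : nat, (i < b ^ (l0 + 3))%nat /\
    Wfun alpha (INR b) (g_i b l0 i) y - Wfun alpha (INR b) (g_i b l0 i) x
    >= 7 / 10 * Rpower (INR b) (alpha * INR l0 - 2 * (1 - alpha))
       * Rpower (y - x) alpha.
Proof.
  intros Hb Ha Hhyp x y Hxy Hd. apply Rmax_Rlt in Hhyp as [H1 H2].
  assert (HB : 2 <= INR b) by (apply (le_INR 2) in Hb; simpl in Hb; lra).
  assert (HBL := B_pow_L_gt_480 (INR b) alpha l0 HB Ha H2).
  assert (Hell : 0 < ell b l0 < 1).
  { split; [apply Rinv_0_lt_compat; lra|]. rewrite <- Rinv_1. apply Rinv_lt_contravar; lra. }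
  rewrite pow_add, pow_1, Rinv_mult in Hd.
  destruct (exists_scale_g_i_increment_ge b l0 x y ltac:(lia) Hell Hxy Hd)
    as [K [i [Hi [Hrho Hinc]]]].
  exists i. split; [exact Hi|].
  eapply Rge_trans; [|apply Rle_ge, (stated_bound_le_gain (INR b) alpha (y - x) K l0); lra].
  assert (HW := Wfun_increment_ge (INR b) alpha (1 - ell b l0) _ _ x y K (S (K + l0))
                 ltac:(lra) Ha ltac:(lra)
                 (g_i_abs_le b l0 Hell i) (g_i_increment_ge b l0 Hell i)
                 ltac:(lra) ltac:(lia) Hinc).
  eapply Rge_trans; [exact HW|].
  apply gain_minus_losses_ge; try lra. now apply numeric_estimate.
Qed.
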